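(* Let $\mathcal{D}$ be an $S(2,k,v)$ and $G_0=0$-$\mathrm{BIG}(\mathcal{D})$. If $v>k^3-2k^2+2k$, then every maximum independent set of $G_0$ is of the form $T(x)$ for some element $x$, and consequently $\alpha(G_0)=\frac{v-1}{k-1}$.
   Context: A Steiner $2$-design $S(2,k,v)$ ($2<k<v$) is a pair $(V,\mathcal{B})$ with $|V|=v$ and $\mathcal{B}$ a collection of $k$-subsets of $V$ (blocks) such that every $2$-subset of $V$ lies in exactly one block. The $0$-block intersection graph $0$-$\mathrm{BIG}(\mathcal{D})$ has the blocks as vertices, two blocks adjacent iff they are disjoint. For an element $x\in V$, $T(x)$ denotes the set of the $\frac{v-1}{k-1}$ blocks containing $x$. $\alpha(G)$ is the independence number. *)

From mathcomp Require Import all_boot.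
Set Implicit Arguments. Unset Strict Implicit. Unset Printing Implicit Defensive.

Section Defs.
Variable V : finType.

Definition steiner2 (k : nat) (B : {set {set V}}) : Prop :=
  [/\ 2 < k, k < #|V|,
      (forall b, b \in B -> #|b| = k) &
      (forall x y : V, x != y ->
         #|[set b in B | (x \in b) && (y \in b)]| = 1)].

Definition T (B : {set {set V}}) (x : V) : {set {set V}} :=
  [set b in B | x \in b].

(* Adjacency in the 0-block intersection graph: distinct disjoint blocks. *)
Definition big0_adj (b1 b2 : {set V}) : bool := (b1 != b2) && [disjoint b1 & b2].

Definition big0_indep (B S : {set {set V}}) : bool :=
  (S \subset B) && [forall b1 in S, forall b2 in S, ~~ big0_adj b1 b2].

Definition big0_max_indep (B S : {set {set V}}) : Prop :=
  big0_indep B S /\ (forall S', big0_indep B S' -> #|S'| <= #|S|).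

Definition alpha0 (B : {set {set V}}) : nat :=
  \max_(S in powerset B | big0_indep B S) #|S|.
End Defs.

(* A point x lies on r = (v-1)/(k-1) blocks, and T(x) is independent since
   its blocks pairwise meet in x, so alpha >= r.  Conversely an intersecting
   family S that is not a star is small: take two of its blocks meeting in p
   and a member M missing p; the members through p are determined by their
   point on M (at most k of them), and the members missing p by their points
   on the two blocks through p (at most (k-1)^2).  Since
   k^3 - 2k^2 + 2k = (k-1)(k + (k-1)^2) + 1, the hypothesis on v says exactly
   r > k + (k-1)^2, so an independent set of size at least r is contained in,
   hence equal to, some T(x). *)

From mathcomp Require Import all_boot zify.

Set Implicit Arguments.
Unset Strict Implicit.
Unset Printing Implicit Defensive.

Lemma sum_mem_card (I : finType) (A C : pred I) :
  \sum_(i in A) (i \in C : nat) = #|[predI A & C]|.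
Proof.
rewrite -sum1_card big_mkcondr /=; apply: eq_bigr => i _.
by case: (i \in C).
Qed.

Lemma steiner_bound_eq (k : nat) : 1 < k ->
  k ^ 3 - 2 * k ^ 2 + 2 * k = (k + (k - 1) ^ 2) * (k - 1) + 1.
Proof.
case: k => [|[|j]] // _; rewrite !expnS expn0 !muln1 subn1 /=.
have : 2 * (j.+2 * j.+2) <= j.+2 * (j.+2 * j.+2) by rewrite leq_pmul2r // muln_gt0.
nia.
Qed.

Definition intersecting (V : finType) (S : {set {set V}}) : Prop :=
  {in S &, forall b1 b2 : {set V}, ~~ [disjoint b1 & b2]}.

Lemma T_subset (V : finType) (B : {set {set V}}) x : T B x \subset B.
Proof. by apply/subsetP => b; rewrite inE => /andP []. Qed.

Lemma T_indep (V : finType) (B : {set {set V}}) x : big0_indep B (T B x).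
Proof.
rewrite /big0_indep T_subset; apply/forall_inP => b1; rewrite inE => /andP [_ xb1].
apply/forall_inP => b2; rewrite inE => /andP [_ xb2].
rewrite /big0_adj negb_and -setI_eq0; apply/orP; right.
by apply/set0Pn; exists x; rewrite inE xb1 xb2.
Qed.

Section SteinerSystem.

Variables (V : finType) (k : nat) (B : {set {set V}}).
Hypothesis k_gt1 : 1 < k.
Hypothesis card_block : forall b, b \in B -> #|b| = k.
Hypothesis pair_block :
  forall x y : V, x != y -> #|[set b in B | (x \in b) && (y \in b)]| = 1.

Lemma block_uniq x y b1 b2 : x != y -> b1 \in B -> b2 \in B ->
  x \in b1 -> y \in b1 -> x \in b2 -> y \in b2 -> b1 = b2.
Proof.
move=> nxy Bb1 Bb2 xb1 yb1 xb2 yb2.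
have /eqP/cards1P [b0 def_b0] := pair_block nxy.
have: b1 \in [set b in B | (x \in b) && (y \in b)] by rewrite inE Bb1 xb1 yb1.
have: b2 \in [set b in B | (x \in b) && (y \in b)] by rewrite inE Bb2 xb2 yb2.
by rewrite def_b0 !inE => /eqP -> /eqP ->.
Qed.

Lemma card_blockD1 b p : b \in B -> p \in b -> #|b :\ p| = k - 1.
Proof. by move=> Bb pb; rewrite -(card_block Bb) (cardsD1 p b) pb add1n subn1. Qed.

(* Double counting of the flags (y, b) with x != y and x, y in b. *)
Lemma card_T_mul x : #|T B x| * (k - 1) = #|V| - 1.
Proof.
have -> : #|V| - 1 = #|[set~ x]| by rewrite cardsC1 subn1.
transitivity (\sum_(y in [set~ x]) \sum_(b in T B x) (y \in b : nat)).
  rewrite exchange_big /= -sum1_card big_distrl /=.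
  apply: eq_bigr => b; rewrite inE => /andP [Bb xb].
  rewrite mul1n sum_mem_card -(card_blockD1 Bb xb).
  by apply: eq_card => y; rewrite !inE andbC.
rewrite -sum1_card; apply: eq_bigr => y; rewrite !inE => nyx.
rewrite sum_mem_card -(pair_block (x := x) (y := y)); last by rewrite eq_sym.
by apply: eq_card => b; rewrite !inE; case: (b \in B).
Qed.

Lemma card_T x : #|T B x| = (#|V| - 1) %/ (k - 1).
Proof. by rewrite -(card_T_mul x) mulnK // subn_gt0. Qed.

Lemma indep_intersecting (S : {set {set V}}) : big0_indep B S -> intersecting S.
Proof.
case/andP=> /subsetP sSB /forall_inP indS b1 b2 Sb1 Sb2.
case: (eqVneq b1 b2) => [<- | nb12].
  rewrite -setI_eq0 setIid -card_gt0 (card_block (sSB _ Sb1)).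
  exact: ltnW.
by have /forall_inP/(_ _ Sb2) := indS _ Sb1; rewrite /big0_adj nb12.
Qed.

Definition meet_point (p : V) (b c : {set V}) : V := odflt p [pick y in b :&: c].

Lemma meet_pointP p (b c : {set V}) :
  ~~ [disjoint b & c] -> meet_point p b c \in b :&: c.
Proof.
rewrite /meet_point -setI_eq0 => /set0Pn [y bcy].
by case: pickP => [// | /(_ y)]; rewrite bcy.
Qed.

(* A block through p is determined by p and its meet point with M. *)
Lemma card_T_meeting p M : M \in B -> p \notin M ->
  #|[set b in T B p | ~~ [disjoint b & M]]| <= k.
Proof.
move=> BM pNM; rewrite -(card_block BM).
have meet_inj : {in [set b in T B p | ~~ [disjoint b & M]] &,
                 injective (meet_point p ^~ M)}.
  move=> b1 b2; rewrite !inE => /andP [/andP [Bb1 pb1] mb1] /andP [/andP [Bb2 pb2] mb2] e12.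
  have /setIP [yb1 yM] := meet_pointP p mb1.
  have /setIP [yb2 _] := meet_pointP p mb2.
  rewrite e12 in yb1 yM.
  apply: (block_uniq (x := p) (y := meet_point p b2 M)) => //.
  by apply: contraNneq pNM => ->.
rewrite -(card_in_imset meet_inj); apply/subset_leq_card/subsetP => y /imsetP [b].
by rewrite inE => /andP [_ /(meet_pointP p) /setIP [_ yM]] ->.
Qed.

(* A block missing p is determined by its meet points with L1 and L2, which
   are distinct because L1 and L2 already share p. *)
Lemma card_meeting_both p L1 L2 : L1 \in T B p -> L2 \in T B p -> L1 != L2 ->
  #|[set b in B | [&& p \notin b, ~~ [disjoint b & L1] & ~~ [disjoint b & L2]]]|
    <= (k - 1) ^ 2.
Proof.
rewrite !inE => /andP [BL1 pL1] /andP [BL2 pL2] nL12.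
rewrite expnS expn1 -{1}(card_blockD1 BL1 pL1) -(card_blockD1 BL2 pL2) -cardsX.
set F := [set b in B | _].
have meets b : b \in F -> [/\ b \in B, p \notin b,
    meet_point p b L1 \in b :&: L1 & meet_point p b L2 \in b :&: L2].
  by rewrite inE => /and4P [Bb pNb /(meet_pointP p) m1 /(meet_pointP p) m2].
have meet_inj : {in F &, injective (fun b => (meet_point p b L1, meet_point p b L2))}.
  move=> b1 b2 /meets [Bb1 pNb1 /setIP [a1 aL1] /setIP [c1 cL2]].
  move=> /meets [Bb2 _ /setIP [a2 _] /setIP [c2 _]] [e1 e2].
  rewrite -e1 in a2; rewrite -e2 in c2.
  apply: (block_uniq (x := meet_point p b1 L1) (y := meet_point p b1 L2)) => //.
  apply: contra_neq nL12 => eac.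
  apply: (block_uniq (x := p) (y := meet_point p b1 L1)) => //; last by rewrite eac.
  by apply: contraNneq pNb1 => ->.
rewrite -(card_in_imset meet_inj); apply/subset_leq_card/subsetP => y /imsetP [b].
move=> /meets [_ pNb /setIP [a1 aL1] /setIP [c1 cL2]] ->.
rewrite !inE aL1 cL2 !andbT.
by apply/andP; split; apply: contraNneq pNb => <-.
Qed.

Lemma intersecting_star (S : {set {set V}}) : S \subset B -> intersecting S ->
  k + (k - 1) ^ 2 < #|S| -> exists p, S \subset T B p.
Proof.
move=> /subsetP sSB meetS big_S.
have /card_gt1P [L1 [L2 [SL1 SL2 nL12]]] : 1 < #|S|.
  by apply: leq_trans big_S; rewrite ltnS ltn_addr // ltnW.
have /set0Pn [p /setIP [pL1 pL2]] : L1 :&: L2 != set0 by rewrite setI_eq0 meetS.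
exists p; apply/subsetP => M SM; rewrite inE sSB //=.
apply: contraLR big_S => pNM; rewrite -leqNgt -(cardsID (T B p) S).
apply: leq_add.
  apply: (leq_trans _ (card_T_meeting (sSB _ SM) pNM)); apply/subset_leq_card/subsetP.
  by move=> b /setIP [Sb Tb]; rewrite inE Tb meetS.
have TL b : b \in S -> p \in b -> b \in T B p by move=> Sb pb; rewrite inE sSB.
apply: (leq_trans _ (card_meeting_both (TL _ SL1 pL1) (TL _ SL2 pL2) nL12)).
apply/subset_leq_card/subsetP => b /setDP [Sb NTb].
rewrite inE sSB //= !meetS // !andbT.
by move: NTb; rewrite inE sSB.
Qed.

Lemma indep_small_or_star (S : {set {set V}}) : big0_indep B S ->
  #|S| <= k + (k - 1) ^ 2 \/ exists p, S \subset T B p.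
Proof.
move=> indS; case: (leqP #|S| (k + (k - 1) ^ 2)) => [|big_S]; first by left.
right; apply: intersecting_star big_S; last exact: indep_intersecting.
by case/andP: indS.
Qed.

Section LargeReplication.

Variable x : V.
Hypothesis big_T : k + (k - 1) ^ 2 < #|T B x|.

Lemma indep_card_le S : big0_indep B S -> #|S| <= #|T B x|.
Proof.
case/indep_small_or_star => [small | [p sSTp]]; first exact: ltnW (leq_ltn_trans small big_T).
by rewrite (card_T x) -(card_T p) subset_leq_card.
Qed.

Lemma indep_card_ge S : big0_indep B S -> #|T B x| <= #|S| -> exists p, S = T B p.
Proof.
case/indep_small_or_star => [small le_TS | [p sSTp] le_TS].
  by have := leq_ltn_trans (leq_trans le_TS small) big_T; rewrite ltnn.
by exists p; apply/eqP; rewrite eqEcard sSTp (card_T p) -(card_T x).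
Qed.

End LargeReplication.

End SteinerSystem.

Theorem lemma6 (V : finType) (k : nat) (B : {set {set V}}) :
  steiner2 k B ->
  k ^ 3 - 2 * k ^ 2 + 2 * k < #|V| ->
  (forall S, big0_max_indep B S -> exists x : V, S = T B x) /\
  alpha0 B = (#|V| - 1) %/ (k - 1).
Proof.
move=> [k_gt2 _ card_block pair_block] v_big.
have k_gt1 := ltnW k_gt2.
have [x0 _] : exists x0 : V, x0 \in V by apply/card_gt0P; apply: leq_ltn_trans v_big.
have big_T : k + (k - 1) ^ 2 < #|T B x0|.
  rewrite -(@ltn_pmul2r (k - 1)) ?subn_gt0 // card_T_mul //.
  by rewrite ltn_subRL addnC -steiner_bound_eq.
split.
  move=> S [indS maxS]; apply: indep_card_ge big_T _ indS _ => //.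
  exact: maxS (T_indep B x0).
rewrite -(card_T k_gt1 card_block pair_block x0); apply/eqP; rewrite eqn_leq.
apply/andP; split.
  by apply/bigmax_leqP => S /andP [_ indS]; apply: indep_card_le big_T _ indS.
by apply: (leq_bigmax_cond (T B x0)); rewrite T_indep andbT powersetE T_subset.
Qed.
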